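(* Let $f \in \mathrm{Inj}(\Omega)$ satisfy $(f)\mathrm{C}_{\mathrm{open}} + (f)\mathrm{C}_{\mathrm{fwd}} = 1$ and $(f)\mathrm{C}_n < \aleph_0$ for all $n \in \mathbb{Z}_+$, and let $h \in \mathrm{Alt}(\Omega)$. Then $fh \approx_{\mathrm{even}} f \approx_{\mathrm{even}} hf$.
   Context: $\Omega$ is a countably infinite set; maps are written on the right and composed left to right. $\mathrm{Inj}(\Omega)$ is the monoid of injective maps $\Omega\to\Omega$; $\mathrm{Alt}(\Omega)$ the group of even permutations moving only finitely many points. For $f\in\mathrm{Inj}(\Omega)$, a cycle of $f$ is a nonempty $\Sigma\subseteq\Omega$ such that (a) for all $\alpha\in\Omega$, $(\alpha)f\in\Sigma$ iff $\alpha\in\Sigma$, and (b) no proper nonempty subset of $\Sigma$ satisfies (a). A forward cycle is an infinite cycle $\Sigma$ with $\Sigma\setminus(\Omega)f\ne\emptyset$; an open cycle is an infinite cycle that is not forward. $(f)\mathrm{C}_n$ ($n\in\mathbb{Z}_+$) is the cardinal number of cycles of cardinality $n$; $(f)\mathrm{C}_{\mathrm{open}}$, $(f)\mathrm{C}_{\mathrm{fwd}}$ the numbers of open and forward cycles. $f\approx_{\mathrm{fin}}g$ means: $(f)\mathrm{C}_{\mathrm{open}}=(g)\mathrm{C}_{\mathrm{open}}$; $(f)\mathrm{C}_{\mathrm{fwd}}=(g)\mathrm{C}_{\mathrm{fwd}}$; $(f)\mathrm{C}_n\ne(g)\mathrm{C}_n$ for only finitely many $n$; and whenever $(f)\mathrm{C}_n\ne(g)\mathrm{C}_n$,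 both are finite. $f\approx_{\mathrm{even}} g$ means $f\approx_{\mathrm{fin}}g$ and $\sum_{n\in\mathbb{Z}_+}((f)\mathrm{C}_n-(g)\mathrm{C}_n)$ is an even integer, where a term is $0$ whenever $(f)\mathrm{C}_n=(g)\mathrm{C}_n$ (even if infinite). *)

From Stdlib Require Import List ZArith Arith.
Import ListNotations.

Set Implicit Arguments.

Definition countably_infinite (T : Type) : Prop :=
  exists e : nat -> T, (forall m n, e m = e n -> m = n) /\ (forall x, exists n, e n = x).

Definition injective_map {T : Type} (f : T -> T) : Prop :=
  forall x y, f x = f y -> x = y.

(* Maps are written on the right and composed left to right:
   (x)(f h) = ((x)f)h. *)
Definition compLR {T : Type} (f g : T -> T) : T -> T := fun x => g (f x).

Definition is_transposition {T : Type} (t : T -> T) : Prop :=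
  exists a b, a <> b /\ t a = b /\ t b = a /\
    (forall x, x <> a -> x <> b -> t x = x).

Definition in_Alt {T : Type} (h : T -> T) : Prop :=
  exists ts : list (T -> T),
    Forall is_transposition ts /\ Nat.even (length ts) = true /\
    (forall x, h x = fold_left (fun y t => t y) ts x).

Definition set_eq {T : Type} (A B : T -> Prop) : Prop := forall x, A x <-> B x.

Definition invariant {T : Type} (f : T -> T) (S : T -> Prop) : Prop :=
  forall a, S (f a) <-> S a.

Definition is_cycle {T : Type} (f : T -> T) (S : T -> Prop) : Prop :=
  (exists x, S x) /\ invariant f S /\
  (forall S' : T -> Prop, (forall x, S' x -> S x) -> (exists x, S' x) ->
      invariant f S' -> set_eq S' S).

Definition has_size {T : Type} (S : T -> Prop) (n : nat) : Prop :=
  exists l : list T, length l = n /\ NoDup l /\ (forall x, S x <-> In x l).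

Definition infinite_set {T : Type} (S : T -> Prop) : Prop :=
  forall l : list T, exists x, S x /\ ~ In x l.

Definition cycle_of_size {T : Type} (f : T -> T) (n : nat) (S : T -> Prop) : Prop :=
  is_cycle f S /\ has_size S n.

Definition forward_cycle {T : Type} (f : T -> T) (S : T -> Prop) : Prop :=
  is_cycle f S /\ infinite_set S /\ exists x, S x /\ forall y, f y <> x.

Definition open_cycle {T : Type} (f : T -> T) (S : T -> Prop) : Prop :=
  is_cycle f S /\ infinite_set S /\ ~ (exists x, S x /\ forall y, f y <> x).

(* ---------- cardinalities of families of subsets (up to extensional equality) ----------
   Since Omega is countable and cycles are disjoint, these cardinals lie in
   {0,1,2,...} U {aleph_0}. *)
Inductive card : Type := Fin (k : nat) | Inf.

Fixpoint distinct_sets {T : Type} (l : list (T -> Prop)) : Prop :=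
  match l with
  | [] => True
  | A :: l' => (forall B, In B l' -> ~ set_eq A B) /\ distinct_sets l'
  end.

Definition has_card {T : Type} (P : (T -> Prop) -> Prop) (c : card) : Prop :=
  match c with
  | Fin k => exists l : list (T -> Prop),
      length l = k /\ Forall P l /\ distinct_sets l /\
      (forall S, P S -> exists S', In S' l /\ set_eq S S')
  | Inf => forall k, exists l : list (T -> Prop),
      length l = k /\ Forall P l /\ distinct_sets l
  end.

Definition same_card {T : Type} (P Q : (T -> Prop) -> Prop) : Prop :=
  forall c, has_card P c <-> has_card Q c.

Definition sameC {T : Type} (f g : T -> T) (n : nat) : Prop :=
  same_card (cycle_of_size f n) (cycle_of_size g n).

Definition approx_fin {T : Type} (f g : T -> T) : Prop :=
  same_card (open_cycle f) (open_cycle g) /\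
  same_card (forward_cycle f) (forward_cycle g) /\
  (exists N, forall n, 0 < n -> N < n -> sameC f g n) /\
  (forall n, 0 < n -> ~ sameC f g n ->
     exists a b, has_card (cycle_of_size f n) (Fin a) /\
                 has_card (cycle_of_size g n) (Fin b)).

(* f ~even g : sum over n in Z_+ of ((f)C_n - (g)C_n) is even, where a term is 0 when
   (f)C_n = (g)C_n.  Terms with n > N vanish; for n <= N, either the counts agree
   (term 0, encoded by a n = b n) or they are the finite numbers a n, b n. *)
Definition approx_even {T : Type} (f g : T -> T) : Prop :=
  approx_fin f g /\
  exists N (a b : nat -> nat),
    (forall n, 0 < n -> N < n -> sameC f g n) /\
    (forall n, 0 < n -> n <= N ->
       (sameC f g n /\ a n = b n) \/
       (has_card (cycle_of_size f n) (Fin (a n)) /\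
        has_card (cycle_of_size g n) (Fin (b n)))) /\
    Z.even (fold_right Z.add 0%Z
              (map (fun n => (Z.of_nat (a n) - Z.of_nat (b n))%Z) (seq 1 N))) = true.

(* The even permutation [h] moves only the finitely many points of a list [D]. Cut the
   unique infinite cycle of [f] after a segment [s, f s, ..., e] containing its points of [D],
   and add the finite cycles of [f] meeting [D]: on the resulting finite window [W], [f]
   induces a permutation [p] (with [p e = s]), while [fh] and [hf] induce [p] composed with
   [h] on either side and agree with [f] off [W]. Since the sign of a permutation of [W] is
   (-1)^(|W| - number of cycles), these three permutations have numbers of cycles of the same
   parity. The finite cycles of [fh] (or [hf]) are those of [f] avoiding [W] plus the cycles
   of its window permutation not through [e], and all remaining points lie on one infinite
   cycle, forward or open according as [f] is. So the counts [C_n] differ only for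
   [n <= |W|], and their differences sum to an even number. *)

From Stdlib Require Import List ZArith Arith Lia Classical ClassicalEpsilon FinFun.
From mathcomp Require all_boot all_fingroup.
Import ListNotations.
(* Requiring ssreflect globally switches bullet checking off. *)
Set Bullet Behavior "Strict Subproofs".

Lemma set_eq_sym {T : Type} (S S' : T -> Prop) : set_eq S S' -> set_eq S' S.
Proof. intros E x; split; apply E. Qed.

Lemma set_eq_trans {T : Type} (S1 S2 S3 : T -> Prop) :
  set_eq S1 S2 -> set_eq S2 S3 -> set_eq S1 S3.
Proof. intros E1 E2 x. rewrite (E1 x). apply E2. Qed.

Lemma infinite_set_ext {T : Type} (S S' : T -> Prop) :
  set_eq S S' -> infinite_set S -> infinite_set S'.
Proof. intros E H l. destruct (H l) as [x [Sx Nx]]. exists x. split; auto. apply E; auto. Qed.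

Lemma list_not_infinite {T : Type} (c : list T) : ~ infinite_set (fun x => In x c).
Proof. intros Hi. destruct (Hi c) as [x [H1 H2]]. auto. Qed.

Lemma iterates_not_bounded {T : Type} (g : T -> T) x (l : list T) :
  (forall i j, Nat.iter i g x = Nat.iter j g x -> i = j) ->
  ~ (forall k, In (Nat.iter k g x) l).
Proof.
intros Hdist Hall.
assert (Hnd : NoDup (map (fun k => Nat.iter k g x) (seq 0 (S (length l))))).
{ apply Injective_map_NoDup_in; [|apply seq_NoDup]. intros i j _ _. apply Hdist. }
apply NoDup_incl_length with (l' := l) in Hnd.
- rewrite length_map, length_seq in Hnd. lia.
- intros y Hy. apply in_map_iff in Hy as [k [<- _]]. auto.
Qed.

(** * Cycles of injective maps *)

Section SameCycle.
Context {T : Type}.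
Implicit Types (g : T -> T) (S : T -> Prop).

Definition same_cycle g x y := exists i j, Nat.iter i g x = Nat.iter j g y.

Lemma same_cycle_refl g x : same_cycle g x x.
Proof. exists 0, 0. reflexivity. Qed.

Lemma same_cycle_sym g x y : same_cycle g x y -> same_cycle g y x.
Proof. intros [i [j H]]. exists j, i. auto. Qed.

Lemma same_cycle_trans g x y z : same_cycle g x y -> same_cycle g y z -> same_cycle g x z.
Proof.
intros [i [j H1]] [k [l H2]]. exists (k + i), (j + l).
rewrite Nat.iter_add, H1, <- Nat.iter_add, Nat.add_comm, Nat.iter_add, H2, <- Nat.iter_add.
reflexivity.
Qed.

Lemma same_cycle_iter g x k : same_cycle g x (Nat.iter k g x).
Proof. exists k, 0. reflexivity. Qed.

Lemma same_cycle_step g x : same_cycle g x (g x).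
Proof. exact (same_cycle_iter g x 1). Qed.

Lemma invariant_iter g S : invariant g S -> forall k a, S (Nat.iter k g a) <-> S a.
Proof.
intros H k; induction k; intros a; simpl; [tauto|].
rewrite (H (Nat.iter k g a)). apply IHk.
Qed.

Lemma invariant_same_cycle g S x y : invariant g S -> S x -> same_cycle g x y -> S y.
Proof.
intros H Sx [i [j E]].
apply (invariant_iter g S H j). rewrite <- E. apply (invariant_iter g S H i). auto.
Qed.

Lemma same_cycle_invariant g x : invariant g (same_cycle g x).
Proof.
intros a; split; intros Hc.
- destruct Hc as [i [j E]]. exists i, (S j). rewrite Nat.iter_succ_r. auto.
- eapply same_cycle_trans; [apply Hc | apply same_cycle_step].
Qed.

Lemma same_cycle_is_cycle g x : is_cycle g (same_cycle g x).
Proof.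
split; [exists x; apply same_cycle_refl|]. split; [apply same_cycle_invariant|].
intros S' Hsub [y Hy] Hinv z; split; auto.
intros Hz. apply (invariant_same_cycle g S' y z Hinv Hy).
eapply same_cycle_trans; [apply same_cycle_sym, Hsub, Hy | exact Hz].
Qed.

Lemma is_cycle_same_cycle g S x : is_cycle g S -> S x -> set_eq S (same_cycle g x).
Proof.
intros [_ [Hinv Hmin]] Sx. apply set_eq_sym, Hmin.
- intros y Hy. eapply invariant_same_cycle; eauto.
- exists x. apply same_cycle_refl.
- apply same_cycle_invariant.
Qed.

Lemma is_cycle_ext g S S' : is_cycle g S -> set_eq S S' -> is_cycle g S'.
Proof.
intros [[x Sx] [Hinv Hmin]] E. split; [exists x; apply E; auto|]. split.
- intros a. rewrite <- (E (g a)), <- (E a). apply Hinv.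
- intros S'' Hs Hne Hi y. rewrite <- (E y).
  revert y. apply Hmin; auto. intros z Hz. apply E; auto.
Qed.

Lemma is_cycle_of_same_cycle g S x : S x -> set_eq S (same_cycle g x) -> is_cycle g S.
Proof.
intros Sx E. eapply is_cycle_ext; [apply (same_cycle_is_cycle g x)|]. apply set_eq_sym, E.
Qed.

Lemma iter_inj g : injective_map g -> forall k a b, Nat.iter k g a = Nat.iter k g b -> a = b.
Proof. intros Hg k; induction k; simpl; intros a b H; auto. Qed.

Lemma iter_period g x i j : injective_map g -> i <= j ->
  Nat.iter i g x = Nat.iter j g x -> Nat.iter (j - i) g x = x.
Proof.
intros Hg Hij E. apply (iter_inj g Hg i). rewrite <- Nat.iter_add.
replace (i + (j - i)) with j by lia. auto.
Qed.

Lemma iter_inj_aperiodic g x : injective_map g -> (forall d, Nat.iter (S d) g x <> x) ->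
  forall i j, Nat.iter i g x = Nat.iter j g x -> i = j.
Proof.
intros Hg Hx.
assert (key : forall i j, i < j -> Nat.iter i g x <> Nat.iter j g x).
{ intros i j Hij E. apply (Hx (j - i - 1)). replace (S (j - i - 1)) with (j - i) by lia.
  apply iter_period; auto; lia. }
intros i j E. destruct (Nat.lt_trichotomy i j) as [H|[H|H]]; auto; exfalso; eapply key; eauto.
Qed.

End SameCycle.

Lemma has_size_unique {T : Type} (S : T -> Prop) n k : has_size S n -> has_size S k -> n = k.
Proof.
intros [l1 [E1 [N1 H1]]] [l2 [E2 [N2 H2]]]. subst.
apply Nat.le_antisymm; apply NoDup_incl_length; auto; intros x Hx.
- apply H2, H1; auto.
- apply H1, H2; auto.
Qed.

Section Cardinals.
Context {T : Type}.
Implicit Types (P Q : (T -> Prop) -> Prop) (S : T -> Prop) (l : list (T -> Prop)).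

Definition enumerates P l : Prop :=
  Forall P l /\ distinct_sets l /\ forall S, P S -> exists S', In S' l /\ set_eq S S'.

Lemma same_card_ext P Q : (forall S, P S <-> Q S) -> same_card P Q.
Proof.
intros H c. assert (Hf : forall l, Forall P l <-> Forall Q l).
{ intros l. rewrite !Forall_forall. split; intros H' x Hx; apply H; auto. }
destruct c as [k|]; simpl; split.
- intros [l [H1 [H2 [H3 H4]]]]. exists l. rewrite <- Hf. repeat split; auto.
  intros S HS. apply H4, H; auto.
- intros [l [H1 [H2 [H3 H4]]]]. exists l. rewrite Hf. repeat split; auto.
  intros S HS. apply H4, H; auto.
- intros H1 k. destruct (H1 k) as [l [? [? ?]]]. exists l. rewrite <- Hf. auto.
- intros H1 k. destruct (H1 k) as [l [? [? ?]]]. exists l. rewrite Hf. auto.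
Qed.

Lemma same_card_sym P Q : same_card P Q -> same_card Q P.
Proof. intros H c. symmetry. apply H. Qed.

Lemma has_card_singleton P J : (forall S, P S <-> set_eq S J) ->
  forall c, has_card P c <-> c = Fin 1.
Proof.
intros H c.
assert (two : forall A B, P A -> P B -> set_eq A B).
{ intros A B HA HB. apply set_eq_trans with J; [apply H | apply set_eq_sym, H]; auto. }
split.
- destruct c as [k|]; simpl.
  + intros [l [Hl [HF [Hd Hc]]]]. rewrite Forall_forall in HF.
    destruct l as [|A [|B l]]; simpl in *; subst; auto.
    * destruct (Hc J) as [S' [[] _]]. apply H. intros x; tauto.
    * exfalso. destruct Hd as [Hd _]. apply (Hd B); [left | apply two; apply HF]; auto.
  + intros Hi. destruct (Hi 2) as [l [Hl [HF Hd]]]. rewrite Forall_forall in HF.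
    destruct l as [|A [|B [|C l]]]; simpl in *; try lia.
    exfalso. destruct Hd as [Hd _]. apply (Hd B); [left | apply two; apply HF]; auto.
- intros ->. exists [J]. split; [auto|]. split; [|split].
  + constructor; auto. apply H. intros x; tauto.
  + split; [intros _ [] | exact I].
  + intros S HS. exists J. split; [left; auto | apply H; auto].
Qed.

Lemma has_card_empty P : (forall S, ~ P S) -> forall c, has_card P c <-> c = Fin 0.
Proof.
intros H c. split.
- destruct c as [k|]; simpl.
  + intros [[|A l] [Hl [HF _]]]; simpl in *; [subst; auto|].
    inversion HF; subst. exfalso. eapply H; eauto.
  + intros Hi. destruct (Hi 1) as [[|A l] [Hl [HF _]]]; simpl in *; [lia|].
    inversion HF; subst. exfalso. eapply H; eauto.
- intros ->. exists []. repeat split; auto. intros S HS. exfalso. eapply H; eauto.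
Qed.

Lemma has_card_one P : has_card P (Fin 1) -> exists J, P J /\ forall S, P S -> set_eq S J.
Proof.
intros [[|J [|]] [Hl [HF [_ Hc]]]]; try discriminate.
exists J. split; [inversion HF; auto|]. intros S HS. destruct (Hc S HS) as [S' [[<-|[]] E]]. auto.
Qed.

Lemma has_card_zero P : has_card P (Fin 0) -> forall S, ~ P S.
Proof.
intros [[|J l] [Hl [_ [_ Hc]]]] S HS; try discriminate. destruct (Hc S HS) as [_ [[] _]].
Qed.

Lemma distinct_sets_filter (b : (T -> Prop) -> bool) l :
  distinct_sets l -> distinct_sets (filter b l).
Proof.
induction l as [|A l IH]; simpl; auto. intros [H1 H2].
destruct (b A); simpl; auto. split; auto.
intros B HB. apply filter_In in HB as [HB _]. auto.
Qed.

Lemma distinct_sets_app l1 l2 : distinct_sets l1 -> distinct_sets l2 ->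
  (forall A B, In A l1 -> In B l2 -> ~ set_eq A B) -> distinct_sets (l1 ++ l2).
Proof.
induction l1 as [|A l1 IH]; simpl; auto. intros [H1 H2] Hd2 Hx. split.
- intros B HB. apply in_app_iff in HB as [HB|HB]; auto.
- apply IH; auto.
Qed.

Lemma distinct_sets_map (A : Type) (P : A -> (T -> Prop)) (L : list A) :
  NoDup L -> (forall c1 c2, In c1 L -> In c2 L -> set_eq (P c1) (P c2) -> c1 = c2) ->
  distinct_sets (map P L).
Proof.
induction L as [|c L IH]; simpl; intros Hn Hi; auto.
inversion Hn; subst. split.
- intros B HB E. apply in_map_iff in HB as [c2 [<- Hc2]].
  assert (c = c2) by (apply Hi; auto). subst. contradiction.
- apply IH; auto.
Qed.

End Cardinals.

Section FiniteCycles.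
Context {T : Type}.
Variable f : T -> T.
Hypothesis f_inj : injective_map f.

Lemma periodic_same_cycle P x : 0 < P -> Nat.iter P f x = x ->
  forall y, same_cycle f x y -> In y (map (fun k => Nat.iter k f x) (seq 0 P)).
Proof.
intros HP Hx y [a [b E]].
assert (iter_mul : forall n, Nat.iter (n * P) f x = x).
{ induction n; simpl; auto. rewrite Nat.iter_add, IHn. auto. }
set (t := a + b * (P - 1)).
assert (Ey : y = Nat.iter t f x).
{ apply (iter_inj f f_inj b). rewrite <- Nat.iter_add.
  replace (b + t) with (a + b * P) by (unfold t; destruct P; [lia|]; nia).
  rewrite Nat.iter_add, iter_mul; auto. }
assert (Et : Nat.iter t f x = Nat.iter (t mod P) f x).
{ clearbody t. transitivity (Nat.iter (t mod P + t / P * P) f x).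
  - f_equal. pose proof (Nat.div_mod_eq t P). lia.
  - rewrite Nat.iter_add, iter_mul. reflexivity. }
rewrite Ey, Et. apply (in_map (fun k => Nat.iter k f x)), in_seq.
split; [lia|]. apply Nat.mod_upper_bound. lia.
Qed.

Lemma finite_cycle_periodic x : ~ infinite_set (same_cycle f x) ->
  exists P, 0 < P /\ Nat.iter P f x = x.
Proof.
intros Hfin. apply NNPP. intros Hn. apply Hfin. intros l. apply NNPP. intros Hl.
apply (iterates_not_bounded f x l).
- apply iter_inj_aperiodic; auto. intros d E. apply Hn. exists (S d). split; [lia | auto].
- intros k. apply NNPP. intros Hk. apply Hl.
  exists (Nat.iter k f x). split; auto. apply same_cycle_iter.
Qed.

Lemma finite_cycle_list x : ~ infinite_set (same_cycle f x) ->
  exists l, forall y, same_cycle f x y <-> In y l.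
Proof.
intros H. destruct (finite_cycle_periodic x H) as [P [HP Hx]].
exists (map (fun k => Nat.iter k f x) (seq 0 P)). intros y; split.
- apply periodic_same_cycle; auto.
- intros Hy. apply in_map_iff in Hy as [k [<- _]]. apply same_cycle_iter.
Qed.

Lemma finite_cycle_preimage x : ~ infinite_set (same_cycle f x) -> exists y, f y = x.
Proof.
intros H. destruct (finite_cycle_periodic x H) as [[|P] [HP Hx]]; [lia|].
exists (Nat.iter P f x). auto.
Qed.

End FiniteCycles.

(** * Cycles of a permutation of a finite window *)

Definition cycle_on {A : Type} (dom : A -> Prop) (s : A -> A) (c : list A) : Prop :=
  NoDup c /\ c <> [] /\ (forall x, In x c -> dom x /\ In (s x) c) /\
  (forall x y, In x c -> In y c -> exists k, y = Nat.iter k s x).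

Definition cycle_decomp_on {A : Type} (dom : A -> Prop) (s : A -> A) (x0 : A)
    (L : list (list A)) (c0 : list A) : Prop :=
  Forall (cycle_on dom s) L /\ cycle_on dom s c0 /\ In x0 c0 /\
  (forall x, dom x -> In x c0 \/ exists c, In c L /\ In x c) /\
  (forall c x, In c L -> In x c -> ~ In x c0) /\
  (forall c1 c2 x, In c1 L -> In c2 L -> In x c1 -> In x c2 -> c1 = c2) /\ NoDup L.

Definition meets {T : Type} (W : list T) (S : T -> Prop) : Prop := exists x, In x W /\ S x.

(* [q] is a permutation of the finite window [W] that agrees with [g] except at [e], where
   it closes up the segment of the infinite cycle of [g] that runs through [W]. *)
Section WindowCycles.
Context {T : Type}.
Variables (g q : T -> T) (W : list T) (e : T).
Hypothesis g_inj : injective_map g.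
Hypothesis e_W : In e W.
Hypothesis q_W : forall x, In x W -> In (q x) W.
Hypothesis q_g : forall x, In x W -> x <> e -> q x = g x.
Hypothesis escape : forall k, ~ In (Nat.iter k g (g e)) W.

Let in_W x := In x W.

Lemma cycle_on_same_cycle c x0 : cycle_on in_W q c -> ~ In e c -> In x0 c ->
  set_eq (fun x => In x c) (same_cycle g x0).
Proof.
intros [Hnd [Hne [Hcl Hco]]] He Hx0.
assert (qg : forall x, In x c -> q x = g x).
{ intros x Hx. apply q_g; [apply Hcl; auto|]. intros ->; auto. }
assert (itq : forall k x, In x c -> Nat.iter k q x = Nat.iter k g x /\ In (Nat.iter k q x) c).
{ induction k; simpl; intros x Hx; auto. destruct (IHk x Hx) as [E1 E2].
  rewrite <- E1. split; [apply qg; auto | apply Hcl; auto]. }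
(* [c] is also closed under [g]-preimages: the [q]-preimage of [g y] in [c] is [y]. *)
assert (back : forall j y, In (Nat.iter j g y) c -> In y c).
{ induction j; intros y Hy; auto.
  rewrite Nat.iter_succ_r in Hy. apply IHj in Hy.
  assert (Hqu : In (q (g y)) c) by (apply Hcl; auto).
  destruct (Hco (q (g y)) (g y) Hqu Hy) as [[|k] Ek].
  - simpl in Ek. rewrite (g_inj y (g y)); auto. rewrite <- (qg (g y) Hy). auto.
  - set (v := Nat.iter k q (q (g y))).
    assert (Hv : In v c) by (apply itq; auto).
    rewrite (g_inj y v); auto. rewrite <- (qg v Hv). rewrite Ek. reflexivity. }
intros y; split; intros Hy.
- destruct (Hco x0 y Hx0 Hy) as [k Ek]. exists k, 0. simpl.
  rewrite Ek. symmetry. apply itq; auto.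
- destruct Hy as [i [j E]]. apply (back j). rewrite <- E.
  destruct (itq i x0 Hx0) as [E1 E2]. rewrite <- E1. auto.
Qed.

Lemma cycle_on_cycle_of_size c : cycle_on in_W q c -> ~ In e c ->
  cycle_of_size g (length c) (fun x => In x c).
Proof.
intros Hc He. pose proof Hc as [Hnd [Hne _]]. split.
- destruct c as [|x0 c']; [congruence|].
  apply (is_cycle_of_same_cycle g _ x0); [left; auto|].
  apply cycle_on_same_cycle; auto. left; auto.
- exists c. split; auto. split; auto. tauto.
Qed.

Lemma iter_q_same_cycle k x : In x W -> Nat.iter k q x = e -> same_cycle g x e.
Proof.
revert x; induction k; intros x Hx E.
- simpl in E. subst. apply same_cycle_refl.
- rewrite Nat.iter_succ_r in E. destruct (classic (x = e)) as [->|Ne]; [apply same_cycle_refl|].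
  rewrite q_g in E; auto.
  eapply same_cycle_trans; [apply same_cycle_step | apply IHk; auto].
  rewrite <- q_g; auto.
Qed.

Lemma iter_e_inj i j : Nat.iter i g e = Nat.iter j g e -> i = j.
Proof.
apply iter_inj_aperiodic; auto. intros d E.
rewrite Nat.iter_succ_r in E. apply (escape d). rewrite E. auto.
Qed.

Lemma same_cycle_e_infinite : infinite_set (same_cycle g e).
Proof.
intros l. apply NNPP. intros Hn. apply (iterates_not_bounded g e l iter_e_inj).
intros k. apply NNPP. intros Hk. apply Hn.
exists (Nat.iter k g e). split; auto. apply same_cycle_iter.
Qed.

Variables (L : list (list T)) (c0 : list T).
Hypothesis decomp : cycle_decomp_on in_W q e L c0.

Lemma decomp_cycle_on c : In c L -> cycle_on in_W q c.
Proof. intros Hc. destruct decomp as [HL _]. rewrite Forall_forall in HL. auto. Qed.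

Lemma decomp_not_e c : In c L -> ~ In e c.
Proof. intros Hc H. destruct decomp as [_ [_ [He [_ [Hd _]]]]]. apply (Hd c e Hc H He). Qed.

Lemma decomp_length c : In c L -> 1 <= length c <= length W.
Proof.
intros Hc. destruct (decomp_cycle_on c Hc) as [Hnd [Hne [Hcl _]]]. split.
- destruct c; [congruence | simpl; lia].
- apply NoDup_incl_length; auto. intros x Hx. apply Hcl; auto.
Qed.

Lemma decomp_meets c : In c L -> meets W (fun x => In x c).
Proof.
intros Hc. destruct (decomp_cycle_on c Hc) as [_ [Hne [Hcl _]]].
destruct c as [|x c']; [congruence|]. exists x. split; [apply Hcl|]; left; auto.
Qed.

Lemma cycle_meets_window S : is_cycle g S -> meets W S ->
  (S e /\ infinite_set S) \/ exists c, In c L /\ set_eq S (fun y => In y c).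
Proof.
intros HS [x [HxW Sx]].
destruct decomp as [_ [Hc0 [He0 [Hcov [Hdisj _]]]]].
destruct (Hcov x HxW) as [Hx|[c [Hc Hx]]].
- left. destruct Hc0 as [_ [_ [_ Hco]]].
  destruct (Hco x e Hx He0) as [k Ek].
  assert (Se : S e) by (apply (is_cycle_same_cycle g S x HS Sx), (iter_q_same_cycle k); auto).
  split; auto. apply infinite_set_ext with (S := same_cycle g e); [|apply same_cycle_e_infinite].
  apply set_eq_sym, is_cycle_same_cycle; auto.
- right. exists c. split; auto.
  apply set_eq_trans with (same_cycle g x); [apply is_cycle_same_cycle; auto|].
  apply set_eq_sym, cycle_on_same_cycle; auto; [apply decomp_cycle_on | apply decomp_not_e]; auto.
Qed.

Lemma cycle_of_size_meets_window n S : cycle_of_size g n S -> meets W S ->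
  exists c, In c L /\ set_eq S (fun y => In y c) /\ length c = n.
Proof.
intros [HS Hs] Hm.
destruct (cycle_meets_window S HS Hm) as [[_ Hi]|[c [Hc E]]].
- exfalso. destruct Hs as [l [_ [_ Hl]]]. destruct (Hi l) as [x [Sx Nx]]. apply Nx, Hl; auto.
- exists c. split; auto. split; auto. apply (has_size_unique S); auto.
  exists c. split; auto. split; [apply (decomp_cycle_on c Hc)|]. intros y. apply E.
Qed.

Lemma infinite_cycle_meets_window S : is_cycle g S -> infinite_set S -> meets W S -> S e.
Proof.
intros HS Hi Hm. destruct (cycle_meets_window S HS Hm) as [[He _]|[c [_ E]]]; auto.
exfalso. apply (list_not_infinite c). eapply infinite_set_ext; eauto.
Qed.

Lemma large_cycle_avoids_window n S : length W < n -> cycle_of_size g n S -> ~ meets W S.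
Proof.
intros Hn HS Hm. destruct (cycle_of_size_meets_window n S HS Hm) as [c [Hc [_ Hl]]].
destruct (decomp_length c Hc). lia.
Qed.

Lemma decomp_set_eq c1 c2 : In c1 L -> In c2 L ->
  set_eq (fun x => In x c1) (fun x => In x c2) -> c1 = c2.
Proof.
intros H1 H2 E. destruct decomp as [_ [_ [_ [_ [_ [Heq _]]]]]].
destruct (decomp_cycle_on c1 H1) as [_ [Hne _]].
destruct c1 as [|x c1']; [congruence|].
apply (Heq _ _ x); auto; [left | apply E; left]; auto.
Qed.

(* The [n]-cycles of [g] meeting [W] are the cycles of [q] of length [n] in [L]. *)
Definition count_of_length (n : nat) : nat := length (filter (fun c => Nat.eqb (length c) n) L).

Lemma has_card_cycle_of_size n (A : list (T -> Prop)) :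
  enumerates (fun S => cycle_of_size g n S /\ ~ meets W S) A ->
  has_card (cycle_of_size g n) (Fin (length A + count_of_length n)).
Proof.
intros [HA [A_dist A_cov]].
set (B := map (fun c x => In x c) (filter (fun c => Nat.eqb (length c) n) L)).
exists (A ++ B). split; [rewrite length_app; unfold B; rewrite length_map; auto|].
split; [|split].
- apply Forall_app. split.
  + eapply Forall_impl; [|exact HA]. intros S []. auto.
  + apply Forall_forall. intros S HS. apply in_map_iff in HS as [c [<- Hc]].
    apply filter_In in Hc as [Hc Hl]. apply Nat.eqb_eq in Hl. subst n.
    apply cycle_on_cycle_of_size; [apply decomp_cycle_on | apply decomp_not_e]; auto.
- apply distinct_sets_app; auto.
  + apply distinct_sets_map; [apply NoDup_filter, decomp|].
    intros c1 c2 H1 H2. apply filter_In in H1 as [H1 _]. apply filter_In in H2 as [H2 _].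
    apply decomp_set_eq; auto.
  + intros S S' HS HS' E. rewrite Forall_forall in HA. apply (HA S HS).
    apply in_map_iff in HS' as [c [<- Hc]]. apply filter_In in Hc as [Hc _].
    destruct (decomp_meets c Hc) as [x [Hx Px]]. exists x. split; auto. apply E. auto.
- intros S HS. destruct (classic (meets W S)) as [Hm|Hm].
  + destruct (cycle_of_size_meets_window n S HS Hm) as [c [Hc [E Hl]]].
    exists (fun x => In x c). split; auto. apply in_or_app; right.
    apply (in_map (fun c x => In x c)), filter_In. split; auto. apply Nat.eqb_eq; auto.
  + destruct (A_cov S (conj HS Hm)) as [S' [H1 H2]]. exists S'.
    split; auto. apply in_or_app; left; auto.
Qed.

End WindowCycles.

(** * Parity of the number of cycles *)

Lemma cycle_on_map {A B : Type} (dA : A -> Prop) (dB : B -> Prop) (w : A -> B)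
    (sA : A -> A) (sB : B -> B) c :
  (forall i j, dA i -> dA j -> w i = w j -> i = j) ->
  (forall i, dA i -> dB (w i)) -> (forall i, dA i -> w (sA i) = sB (w i)) ->
  cycle_on dA sA c -> cycle_on dB sB (map w c).
Proof.
intros w_inj w_dom w_s [Hnd [Hne [Hcl Hco]]].
assert (w_iter : forall k i, In i c -> w (Nat.iter k sA i) = Nat.iter k sB (w i) /\
                                      In (Nat.iter k sA i) c).
{ induction k; simpl; intros i Hi; auto. destruct (IHk i Hi) as [E Hk].
  rewrite w_s, E by (apply Hcl; auto). split; auto. apply Hcl; auto. }
split; [|split; [|split]].
- apply Injective_map_NoDup_in; auto. intros x y Hx Hy. apply w_inj; apply Hcl; auto.
- destruct c; simpl; congruence.
- intros x Hx. apply in_map_iff in Hx as [i [<- Hi]]. destruct (Hcl i Hi) as [H1 H2].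
  split; [apply w_dom; auto|]. rewrite <- w_s; auto. apply in_map; auto.
- intros x y Hx Hy. apply in_map_iff in Hx as [i [<- Hi]]. apply in_map_iff in Hy as [j [<- Hj]].
  destruct (Hco i j Hi Hj) as [k ->]. exists k. apply w_iter; auto.
Qed.

Lemma cycle_decomp_on_map {A B : Type} (dA : A -> Prop) (dB : B -> Prop) (w : A -> B)
    (sA : A -> A) (sB : B -> B) x0 L c0 :
  (forall i j, dA i -> dA j -> w i = w j -> i = j) ->
  (forall i, dA i -> dB (w i)) -> (forall y, dB y -> exists i, dA i /\ w i = y) ->
  (forall i, dA i -> w (sA i) = sB (w i)) ->
  cycle_decomp_on dA sA x0 L c0 -> cycle_decomp_on dB sB (w x0) (map (map w) L) (map w c0).
Proof.
intros w_inj w_dom w_surj w_s [HL [Hc0 [Hx0 [Hcov [Hdisj [Heq Hnd]]]]]].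
assert (Hdom : forall c i, In c (c0 :: L) -> In i c -> dA i).
{ intros c i [<-|Hc] Hi; [apply Hc0; auto|].
  rewrite Forall_forall in HL. apply (HL c Hc); auto. }
split; [|split; [|split; [|split; [|split; [|split]]]]].
- rewrite Forall_forall in *. intros c Hc. apply in_map_iff in Hc as [c' [<- Hc']].
  apply (cycle_on_map dA dB w sA sB); auto.
- apply (cycle_on_map dA dB w sA sB); auto.
- apply in_map; auto.
- intros y Hy. destruct (w_surj y Hy) as [i [Hi <-]].
  destruct (Hcov i Hi) as [H|[c [Hc H]]]; [left; apply in_map; auto|].
  right. exists (map w c). split; apply in_map; auto.
- intros c y Hc Hy Hy'. apply in_map_iff in Hc as [c' [<- Hc']].
  apply in_map_iff in Hy as [i [<- Hi]]. apply in_map_iff in Hy' as [j [Ej Hj]].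
  assert (j = i) by (apply w_inj; [apply (Hdom c0) | apply (Hdom c') | ]; simpl; auto).
  subst.
  eapply Hdisj; eauto.
- intros c1 c2 y H1 H2 Hy1 Hy2.
  apply in_map_iff in H1 as [d1 [<- Hd1]]. apply in_map_iff in H2 as [d2 [<- Hd2]].
  apply in_map_iff in Hy1 as [i [<- Hi]]. apply in_map_iff in Hy2 as [j [Ej Hj]].
  assert (j = i) by (apply w_inj; [apply (Hdom d2) | apply (Hdom d1) | ]; simpl; auto).
  subst.
  f_equal. eapply Heq; eauto.
- apply Injective_map_NoDup_in; auto. intros c1 c2 H1 H2 E.
  rewrite Forall_forall in HL. destruct (HL c1 H1) as [_ [Hne _]].
  destruct c1 as [|i c1']; [congruence|].
  assert (Hw : In (w i) (map w c2)) by (rewrite <- E; left; auto).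
  apply in_map_iff in Hw as [j [Ej Hj]].
  assert (j = i) by (apply w_inj; [apply (Hdom c2) | apply (Hdom (i :: c1')) | ]; simpl; auto).
  subst.
  eapply Heq; eauto. left; auto.
Qed.

Definition swap_nat (a b i : nat) : nat :=
  if Nat.eqb i a then b else if Nat.eqb i b then a else i.

Definition apply_swaps (ps : list (nat * nat)) (i : nat) : nat :=
  fold_left (fun j p => swap_nat (fst p) (snd p) j) ps i.

Definition swaps_below (m : nat) (ps : list (nat * nat)) : Prop :=
  Forall (fun p => fst p < m /\ snd p < m /\ fst p <> snd p) ps.

Definition perm_below (m : nat) (s : nat -> nat) : Prop :=
  (forall i, i < m -> s i < m) /\ (forall i j, i < m -> j < m -> s i = s j -> i = j).

Module CycleParity.
Import all_boot all_fingroup.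

Lemma In_mem (T : eqType) (x : T) (s : seq T) : List.In x s <-> x \in s.
Proof.
elim: s => [|y s IH] //=; rewrite in_cons; split.
- by case=> [->|/IH ->]; rewrite ?eqxx ?orbT.
- by case/orP=> [/eqP ->|/IH]; [left|right].
Qed.

Lemma uniq_NoDup (T : eqType) (s : seq T) : uniq s -> NoDup s.
Proof.
elim: s => [|x s IH] /=; first by constructor.
by case/andP=> /negP nx /IH; constructor=> // /In_mem.
Qed.

Lemma length_size (T : Type) (s : seq T) : length s = size s.
Proof. by elim: s => //= x s ->. Qed.

Lemma even_odd k : Nat.even k = ~~ odd k.
Proof. by elim: k => // k IH; rewrite Nat.even_succ -Nat.negb_even IH negbK. Qed.

Section OrbitSeqs.
Variable n' : nat.
Local Notation n := n'.+1.
Variables (s : {perm 'I_n}) (sn : nat -> nat).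
Hypothesis s_val : forall j : 'I_n, val (s j) = sn (val j).
Variable i0 : 'I_n.

Definition orbit_seq (X : {set 'I_n}) : seq nat := [seq val j | j <- enum X].

Definition other_orbit_seqs : seq (seq nat) :=
  [seq orbit_seq X | X <- enum (porbits s :\ porbit s i0)].

Lemma mem_orbit_seq X i : (i \in orbit_seq X) = (i < n) && (insubd i0 i \in X).
Proof.
have insubd_val (j : 'I_n) : insubd i0 (val j) = j.
  by apply: val_inj; rewrite val_insubd ltn_ord.
apply/mapP/idP=> [[j]|/andP[lt iX]]; first by rewrite mem_enum => jX ->; rewrite ltn_ord insubd_val.
by exists (insubd i0 i); rewrite ?mem_enum // val_insubd lt.
Qed.

Lemma orbit_seq_inj : injective orbit_seq.
Proof.
move=> X1 X2 E; apply/setP=> j.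
by have := mem_orbit_seq X1 (val j); rewrite E mem_orbit_seq ltn_ord valKd.
Qed.

Lemma iter_val k (j : 'I_n) : val (iter k s j) = Nat.iter k sn (val j).
Proof. by elim: k => //= k <-; rewrite s_val. Qed.

Lemma porbit_eq_of_mem {x y z} : z \in porbit s x -> z \in porbit s y -> porbit s x = porbit s y.
Proof. by rewrite -!eq_porbit_mem => /eqP <- /eqP. Qed.

Lemma orbit_seq_cycle x : cycle_on (fun i => lt i n) sn (orbit_seq (porbit s x)).
Proof.
split; first by apply: uniq_NoDup; rewrite map_inj_uniq ?enum_uniq //; apply: val_inj.
split.
  move=> E; have : val x \in orbit_seq (porbit s x) by apply: map_f; rewrite mem_enum porbit_id.
  by rewrite E.
split.
- move=> i /In_mem /mapP [j]; rewrite mem_enum => jO ->; split; first exact/ltP/ltn_ord.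
  apply/In_mem; rewrite -s_val; apply: map_f; rewrite mem_enum.
  by case/porbitP: jO => k ->; rewrite -permM -expgSr mem_porbit.
- move=> i i' /In_mem /mapP [j]; rewrite mem_enum => jO ->.
  move=> /In_mem /mapP [j']; rewrite mem_enum => j'O ->.
  have : j' \in porbit s j by rewrite (porbit_eq_of_mem (porbit_id s j) jO).
  by case/porbitP=> k ->; exists k; rewrite permX iter_val.
Qed.

Lemma porbits_decomp :
  cycle_decomp_on (fun i => lt i n) sn (val i0) other_orbit_seqs (orbit_seq (porbit s i0)).
Proof.
have in_porbits X : X \in porbits s -> exists x, X = porbit s x.
  by case/imsetP=> x _ ->; exists x.
split.
  apply/Forall_forall=> c /In_mem /mapP [X]; rewrite mem_enum => /setD1P [_ /in_porbits [x ->]] ->.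
  exact: orbit_seq_cycle.
split; first exact: orbit_seq_cycle.
split; first by apply/In_mem; apply: map_f; rewrite mem_enum porbit_id.
split.
  move=> i /ltP lt; set j := Ordinal lt; rewrite (_ : i = val j) //.
  have jO : val j \in orbit_seq (porbit s j) by apply: map_f; rewrite mem_enum porbit_id.
  have [E|NE] := eqVneq (porbit s j) (porbit s i0); first by left; apply/In_mem; rewrite -E.
  right; exists (orbit_seq (porbit s j)); split; last exact/In_mem.
  by apply/In_mem; apply: map_f; rewrite mem_enum; apply/setD1P; split; last exact: imset_f.
split.
  move=> c i /In_mem /mapP [X]; rewrite mem_enum => /setD1P [NE /in_porbits [x EX]] -> /In_mem.
  rewrite mem_orbit_seq EX => /andP [_ iX] /In_mem; rewrite mem_orbit_seq => /andP [_ iO].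
  by move: NE; rewrite EX (porbit_eq_of_mem iX iO) eqxx.
split.
  move=> c1 c2 i /In_mem /mapP [X1]; rewrite mem_enum => /setD1P [_ /in_porbits [x ->]] ->.
  move=> /In_mem /mapP [X2]; rewrite mem_enum => /setD1P [_ /in_porbits [y ->]] ->.
  move=> /In_mem; rewrite mem_orbit_seq => /andP [_ ix].
  move=> /In_mem; rewrite mem_orbit_seq => /andP [_ iy].
  by rewrite (porbit_eq_of_mem ix iy).
by apply: uniq_NoDup; rewrite map_inj_uniq ?enum_uniq //; exact: orbit_seq_inj.
Qed.

Lemma size_other_orbit_seqs : (size other_orbit_seqs).+1 = #|porbits s|.
Proof.
have i0O : porbit s i0 \in porbits s by exact: imset_f.
by rewrite size_map -cardE (cardsD1 (porbit s i0) (porbits s)) i0O.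
Qed.

End OrbitSeqs.

Section NatPerms.
Variable n' : nat.
Local Notation n := n'.+1.

Definition ord_fun (sn : nat -> nat) (i : 'I_n) : 'I_n := insubd i (sn i).

Lemma ord_fun_val sn i : perm_below n sn -> val (ord_fun sn i) = sn (val i).
Proof.
case=> sn_lt _; have lt_sn : sn (val i) < n by apply/ltP/sn_lt/ltP/ltn_ord.
by rewrite val_insubd lt_sn.
Qed.

Lemma ord_fun_inj sn : perm_below n sn -> injective (ord_fun sn).
Proof.
move=> sn_perm i j /(congr1 val); rewrite !ord_fun_val // => E.
by apply/val_inj/(proj2 sn_perm) => //; apply/ltP/ltn_ord.
Qed.

Definition swaps_perm (ps : seq (nat * nat)) : {perm 'I_n} :=
  \prod_(p <- ps) tperm (inord p.1) (inord p.2).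

Lemma swaps_perm_val ps j : swaps_below n ps -> val (swaps_perm ps j) = apply_swaps ps (val j).
Proof.
elim: ps j => [|[a b] ps IH] j; first by rewrite /swaps_perm big_nil perm1.
case/Forall_cons_iff=> /= [[/ltP a_lt [/ltP b_lt _]] ps_ok].
rewrite /swaps_perm big_cons permM IH //=; congr apply_swaps.
rewrite /swap_nat; case: tpermP => [->|->|ja jb]; rewrite ?inordK //.
- by rewrite Nat.eqb_refl.
- by case: Nat.eqb_spec => // _; rewrite Nat.eqb_refl.
- have jE : inord (val j) = j by apply/val_inj; rewrite /= inordK.
  case: Nat.eqb_spec => [E|_]; first by case: ja; rewrite -E jE.
  by case: Nat.eqb_spec => [E|//]; case: jb; rewrite -E jE.
Qed.

Lemma odd_swaps_perm ps : swaps_below n ps -> odd_perm (swaps_perm ps) = odd (size ps).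
Proof.
move=> ps_ok; rewrite /swaps_perm -(big_map (fun p => (inord p.1, inord p.2)) xpredT
  (fun t : 'I_n * 'I_n => tperm t.1 t.2)) odd_perm_prod ?size_map //.
elim: ps ps_ok => //= [[a b] ps IH] /Forall_cons_iff /= [[/ltP a_lt [/ltP b_lt ab]] /IH ->].
by rewrite andbT /dpair /=; apply/eqP=> /(congr1 val) /=; rewrite !inordK.
Qed.

End NatPerms.

Lemma cycle_decomp_parity m s1 s2 ps i0 :
  perm_below m s1 -> lt i0 m -> swaps_below m ps -> Nat.even (length ps) = true ->
  (forall i, lt i m -> s2 i = apply_swaps ps (s1 i)) \/
  (forall i, lt i m -> s2 i = s1 (apply_swaps ps i)) ->
  exists L1 c1 L2 c2,
    cycle_decomp_on (fun i => lt i m) s1 i0 L1 c1 /\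
    cycle_decomp_on (fun i => lt i m) s2 i0 L2 c2 /\
    Nat.even (length L1) = Nat.even (length L2).
Proof.
case: m => [|n'] s1_perm i0_lt ps_ok ps_even s2_def; first by inversion i0_lt.
set P1 := perm (@ord_fun_inj n' s1 s1_perm).
have P1_val j : val (P1 j) = s1 (val j) by rewrite permE ord_fun_val.
have Pt_even : odd_perm (swaps_perm n' ps) = false.
  by rewrite odd_swaps_perm // -length_size -[odd _]negbK -even_odd ps_even.
set j0 : 'I_n'.+1 := Ordinal (introT ltP i0_lt).
suff [P2 P2_val odd_P2] : exists2 P2 : {perm 'I_n'.+1},
    (forall j, val (P2 j) = s2 (val j)) & odd_perm P2 = odd_perm P1.
  exists (other_orbit_seqs n' P1 j0), (orbit_seq n' (porbit P1 j0)),
         (other_orbit_seqs n' P2 j0), (orbit_seq n' (porbit P2 j0)).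
  split; first exact: porbits_decomp.
  split; first exact: porbits_decomp.
  (* [odd_perm P] is the parity of [n + #|porbits P|]. *)
  move: odd_P2; rewrite /odd_perm -!(size_other_orbit_seqs n' _ j0) /= !even_odd !length_size.
  by move/addbI/negb_inj=> ->.
have lt_ord (j : 'I_n'.+1) : lt (val j) n'.+1 by apply/ltP/ltn_ord.
case: s2_def => s2E; [exists (P1 * swaps_perm n' ps)%g | exists (swaps_perm n' ps * P1)%g].
- by move=> j; rewrite permM swaps_perm_val // P1_val s2E.
- by rewrite odd_permM Pt_even addbF.
- by move=> j; rewrite permM P1_val swaps_perm_val // s2E.
- by rewrite odd_permM Pt_even.
Qed.

End CycleParity.

Definition apply_all {T : Type} (ts : list (T -> T)) (x : T) : T :=
  fold_left (fun y t => t y) ts x.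

Definition fixes_outside {T : Type} (D : list T) (t : T -> T) : Prop :=
  forall x, ~ In x D -> t x = x.

Section Transpositions.
Context {T : Type}.

Lemma transposition_involutive (t : T -> T) : is_transposition t -> forall x, t (t x) = x.
Proof.
intros [a [b [Hab [Ha [Hb Ho]]]]] x.
destruct (classic (x = a)) as [->|Na]; [congruence|].
destruct (classic (x = b)) as [->|Nb]; [congruence|].
rewrite (Ho x Na Nb). apply Ho; auto.
Qed.

Lemma transposition_moves_inside (t : T -> T) D :
  is_transposition t -> fixes_outside D t -> exists a b, t a = b /\ t b = a /\ a <> b /\
    In a D /\ In b D /\ forall x, x <> a -> x <> b -> t x = x.
Proof.
intros [a [b [Hab [Ha [Hb Ho]]]]] Hfix. exists a, b.
repeat split; auto; apply NNPP; intros HD; apply Hab.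
- rewrite <- Ha. symmetry. apply Hfix; auto.
- rewrite <- Hb. apply Hfix; auto.
Qed.

Lemma transpositions_support (ts : list (T -> T)) : Forall is_transposition ts ->
  exists D, Forall (fixes_outside D) ts.
Proof.
induction 1 as [|t ts [a [b [_ [_ [_ Ho]]]]] _ [D HD]].
- exists []. constructor.
- exists (a :: b :: D). constructor.
  + intros x Hx. apply Ho; intros ->; apply Hx; simpl; auto.
  + eapply Forall_impl; [|exact HD]. intros t' Ht' x Hx. apply Ht'.
    intros H; apply Hx; simpl; auto.
Qed.

Lemma apply_all_inj (ts : list (T -> T)) : Forall is_transposition ts ->
  forall x y, apply_all ts x = apply_all ts y -> x = y.
Proof.
unfold apply_all. induction 1 as [|t ts Ht _ IH]; simpl; intros x y E; auto.
rewrite <- (transposition_involutive t Ht x), <- (transposition_involutive t Ht y).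
f_equal. auto.
Qed.

Lemma apply_all_surj (ts : list (T -> T)) : Forall is_transposition ts ->
  forall y, exists x, apply_all ts x = y.
Proof.
unfold apply_all. induction 1 as [|t ts Ht _ IH]; simpl; intros y; [exists y; auto|].
destruct (IH y) as [z Hz]. exists (t z). simpl. rewrite transposition_involutive; auto.
Qed.

Lemma apply_all_fixes_outside (D : list T) (ts : list (T -> T)) :
  Forall (fixes_outside D) ts -> fixes_outside D (apply_all ts).
Proof.
unfold apply_all. induction 1 as [|t ts Ht _ IH]; simpl; intros x Hx; auto.
rewrite Ht; auto.
Qed.

End Transpositions.

Lemma fixes_outside_maps_into {T : Type} (h : T -> T) D :
  injective_map h -> fixes_outside D h -> forall x, In x D -> In (h x) D.
Proof.
intros Hinj Hfix x Hx. apply NNPP. intros Hn.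
assert (h (h x) = h x) as E by (apply Hfix; auto).
apply Hinj in E. rewrite E in Hn. auto.
Qed.

Definition eq_dec_classic {T : Type} (x y : T) : {x = y} + {x <> y} :=
  excluded_middle_informative (x = y).

Fixpoint index_of {T : Type} (x : T) (l : list T) : nat :=
  match l with [] => 0 | y :: l' => if eq_dec_classic x y then 0 else S (index_of x l') end.

Section IndexOf.
Context {T : Type}.
Implicit Types (x d : T) (l : list T).

Lemma index_of_lt x l : In x l -> index_of x l < length l.
Proof.
induction l as [|y l IH]; simpl; intros H; [contradiction|].
destruct (eq_dec_classic x y); [lia|]. destruct H as [->|H]; [congruence|]. specialize (IH H). lia.
Qed.

Lemma nth_index_of x l d : In x l -> nth (index_of x l) l d = x.
Proof.
induction l as [|y l IH]; simpl; intros H; [contradiction|].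
destruct (eq_dec_classic x y); [auto|]. destruct H as [->|H]; [congruence|]. auto.
Qed.

Lemma index_of_nth l d i : NoDup l -> i < length l -> index_of (nth i l d) l = i.
Proof.
revert i; induction l as [|y l IH]; simpl; intros i Hn Hi; [lia|].
inversion Hn; subst. destruct i as [|i].
- destruct (eq_dec_classic y y); congruence.
- destruct (eq_dec_classic (nth i l d) y) as [E|E].
  + exfalso. apply H1. rewrite <- E. apply nth_In. lia.
  + f_equal. apply IH; auto. lia.
Qed.

End IndexOf.

Section WindowIndex.
Context {T : Type}.
Variables (W : list T) (e : T).
Hypothesis W_nodup : NoDup W.
Hypothesis e_W : In e W.

Local Notation m := (length W).
Local Notation w i := (nth i W e).

Lemma nth_In_window i : i < m -> In (w i) W.
Proof. apply nth_In. Qed.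

Lemma nth_window_inj i j : i < m -> j < m -> w i = w j -> i = j.
Proof.
intros Hi Hj E. rewrite <- (index_of_nth W e i), <- (index_of_nth W e j); auto. congruence.
Qed.

Definition index_fun (q : T -> T) (i : nat) : nat := index_of (q (nth i W e)) W.

Lemma index_fun_nth q i : (forall x, In x W -> In (q x) W) -> i < m ->
  w (index_fun q i) = q (w i).
Proof. intros q_W Hi. apply nth_index_of, q_W, nth_In_window; auto. Qed.

Lemma index_fun_perm q : (forall x, In x W -> In (q x) W) ->
  (forall x y, In x W -> In y W -> q x = q y -> x = y) -> perm_below m (index_fun q).
Proof.
intros q_W q_inj. split.
- intros i Hi. apply index_of_lt, q_W, nth_In_window; auto.
- intros i j Hi Hj E. apply nth_window_inj, q_inj; try apply nth_In_window; auto.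
  rewrite <- !index_fun_nth by auto. congruence.
Qed.

Lemma cycle_decomp_of_index_fun q L c0 : (forall x, In x W -> In (q x) W) ->
  cycle_decomp_on (fun i => i < m) (index_fun q) (index_of e W) L c0 ->
  cycle_decomp_on (fun x => In x W) q e (map (map (fun i => w i)) L) (map (fun i => w i) c0).
Proof.
intros q_W HD.
assert (w_surj : forall y, In y W -> exists i, i < m /\ w i = y).
{ intros y Hy. exists (index_of y W). split; [apply index_of_lt | apply nth_index_of]; auto. }
pose proof (cycle_decomp_on_map (fun i => i < m) (fun x => In x W) (fun i => w i)
  (index_fun q) q _ _ _ nth_window_inj nth_In_window w_surj
  (fun i Hi => index_fun_nth q i q_W Hi) HD) as E.
cbv beta in E. rewrite nth_index_of in E; auto.
Qed.

Lemma window_swaps (ts : list (T -> T)) :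
  Forall is_transposition ts -> Forall (fixes_outside W) ts ->
  exists ps, length ps = length ts /\ swaps_below m ps /\
    forall i, i < m -> apply_all ts (w i) = w (apply_swaps ps i) /\ apply_swaps ps i < m.
Proof.
induction 1 as [|t ts Ht _ IH]; intros Hfix.
{ exists []. repeat split; auto. constructor. }
inversion Hfix as [|? ? Hft Hfix']; subst.
destruct (IH Hfix') as [ps [Hl [Hps Hw]]].
destruct (transposition_moves_inside t W Ht Hft) as [a [b [Ha [Hb [Hab [HaW [HbW Ho]]]]]]].
exists ((index_of a W, index_of b W) :: ps). split; [simpl; congruence|]. split.
- constructor; auto. simpl. repeat split; try apply index_of_lt; auto.
  intros E. apply Hab. rewrite <- (nth_index_of a W e), <- (nth_index_of b W e), E; auto.
- intros i Hi. simpl.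
  assert (Hs : t (w i) = w (swap_nat (index_of a W) (index_of b W) i) /\
               swap_nat (index_of a W) (index_of b W) i < m).
  { unfold swap_nat. destruct (Nat.eqb_spec i (index_of a W)) as [->|E1].
    - rewrite !nth_index_of, Ha by auto. split; [auto | apply index_of_lt; auto].
    - destruct (Nat.eqb_spec i (index_of b W)) as [->|E2].
      + rewrite !nth_index_of, Hb by auto. split; [auto | apply index_of_lt; auto].
      + split; auto. apply Ho.
        * intros E. apply E1. rewrite <- E. symmetry. apply index_of_nth; auto.
        * intros E. apply E2. rewrite <- E. symmetry. apply index_of_nth; auto. }
  destruct Hs as [-> Hs]. apply Hw; auto.
Qed.

Lemma window_cycle_parity (p q : T -> T) (ts : list (T -> T)) :
  (forall x, In x W -> In (p x) W) ->
  (forall x y, In x W -> In y W -> p x = p y -> x = y) ->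
  Forall is_transposition ts -> Forall (fixes_outside W) ts -> Nat.even (length ts) = true ->
  (forall x, q x = apply_all ts (p x)) \/ (forall x, q x = p (apply_all ts x)) ->
  exists L1 c1 L2 c2, cycle_decomp_on (fun x => In x W) p e L1 c1 /\
    cycle_decomp_on (fun x => In x W) q e L2 c2 /\ Nat.even (length L1) = Nat.even (length L2).
Proof.
intros p_W p_inj Htr Hfix Hev Hq.
destruct (window_swaps ts Htr Hfix) as [ps [Hl [Hps Hw]]].
assert (h_W : forall x, In x W -> In (apply_all ts x) W).
{ intros x Hx. rewrite <- (nth_index_of x W e Hx), (proj1 (Hw _ (index_of_lt x W Hx))).
  apply nth_In_window, Hw, index_of_lt; auto. }
assert (q_W : forall x, In x W -> In (q x) W).
{ intros x Hx. destruct Hq as [H|H]; rewrite H; auto. }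
pose proof (index_fun_perm p p_W p_inj) as p_perm.
destruct (CycleParity.cycle_decomp_parity m (index_fun p) (index_fun q) ps (index_of e W))
  as [L1 [c1 [L2 [c2 [D1 [D2 Hpar]]]]]]; auto.
- apply index_of_lt; auto.
- congruence.
- destruct Hq as [H|H]; [left|right]; intros i Hi; unfold index_fun at 1; rewrite H.
  + rewrite <- (index_fun_nth p i p_W Hi), (proj1 (Hw _ (proj1 p_perm i Hi))).
    apply index_of_nth; auto. apply Hw, p_perm; auto.
  + rewrite (proj1 (Hw i Hi)). reflexivity.
- exists (map (map (fun i => w i)) L1), (map (fun i => w i) c1),
         (map (map (fun i => w i)) L2), (map (fun i => w i) c2).
  split; [|split]; try apply cycle_decomp_of_index_fun; auto. rewrite !length_map. auto.
Qed.

End WindowIndex.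

(** * Construction of the window *)

Section WindowConstruction.
Context {T : Type}.
Variables (f : T -> T) (I : T -> Prop).
Hypothesis f_inj : injective_map f.
Hypothesis I_cycle : is_cycle f I.
Hypothesis I_infinite : infinite_set I.
Hypothesis I_unique : forall S, is_cycle f S -> infinite_set S -> set_eq S I.

Lemma I_same_cycle x y : I x -> same_cycle f x y -> I y.
Proof. intros Hx Hc. apply (invariant_same_cycle f I x y); auto. apply (proj1 (proj2 I_cycle)). Qed.

Lemma not_I_finite d : ~ I d -> ~ infinite_set (same_cycle f d).
Proof.
intros Hd Hinf. apply Hd, (I_unique _ (same_cycle_is_cycle f d) Hinf), same_cycle_refl.
Qed.

Lemma I_iter_inj s : I s -> forall i j, Nat.iter i f s = Nat.iter j f s -> i = j.
Proof.
intros Hs. apply iter_inj_aperiodic; auto. intros d E.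
destruct (I_infinite (map (fun k => Nat.iter k f s) (seq 0 (S d)))) as [y [Iy Ny]].
apply Ny, (periodic_same_cycle f f_inj); [lia | exact E |].
apply (is_cycle_same_cycle f I s I_cycle Hs); auto.
Qed.

Lemma I_segment (D : list T) : exists s M, I s /\
  forall d, In d D -> I d -> exists k, k < M /\ d = Nat.iter k f s.
Proof.
induction D as [|d D [s [M [Hs HM]]]].
{ destruct I_cycle as [[s Hs] _]. exists s, 0. split; auto. intros d []. }
destruct (classic (I d)) as [Hd|Hd].
2:{ exists s, M. split; auto. intros d' [<-|Hd'] Id'; [contradiction | auto]. }
destruct (proj1 (is_cycle_same_cycle f I s I_cycle Hs d) Hd) as [i [j E]].
destruct (le_lt_dec j i) as [Hji|Hji].
- exists s, (M + (i - j) + 1). split; auto. intros d' [<-|Hd'] Id'.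
  + exists (i - j). split; [lia|]. apply (iter_inj f f_inj j). rewrite <- Nat.iter_add.
    replace (j + (i - j)) with i by lia. auto.
  + destruct (HM d' Hd' Id') as [k [Hk ->]]. exists k. split; [lia | auto].
- exists d, (M + (j - i) + 1). split; auto. intros d' [<-|Hd'] Id'.
  + exists 0. split; [lia | auto].
  + destruct (HM d' Hd' Id') as [k [Hk ->]]. exists (k + (j - i)). split; [lia|].
    rewrite Nat.iter_add. f_equal. apply (iter_inj f f_inj i). rewrite <- Nat.iter_add.
    replace (i + (j - i)) with j by lia. auto.
Qed.

Lemma finite_cycles_meeting (D : list T) : exists l, forall y,
  In y l <-> exists d, In d D /\ ~ I d /\ same_cycle f d y.
Proof.
induction D as [|d D [l Hl]].
{ exists []. intros y; split; [intros [] | intros [d [[] _]]]. }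
destruct (classic (I d)) as [Hd|Hd].
- exists l. intros y. rewrite Hl. split.
  + intros [d' [H1 H2]]. exists d'. split; [right|]; auto.
  + intros [d' [[<-|H1] H2]]; [tauto|]. exists d'. auto.
- destruct (finite_cycle_list f f_inj d (not_I_finite d Hd)) as [l' Hl'].
  exists (l ++ l'). intros y. rewrite in_app_iff, Hl, <- Hl'. split.
  + intros [[d' [H1 H2]]|H]; [exists d'; split; [right|]; auto|].
    exists d. split; [left|]; auto.
  + intros [d' [[<-|H1] H2]]; [right; tauto|]. left. exists d'. auto.
Qed.

Section Segment.
Variables (D : list T) (s : T) (M : nat) (lF : list T).
Hypothesis I_s : I s.
Hypothesis D_segment : forall d, In d D -> I d -> exists k, k < M /\ d = Nat.iter k f s.
Hypothesis lF_spec : forall y, In y lF <-> exists d, In d D /\ ~ I d /\ same_cycle f d y.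

Definition window : list T :=
  nodup eq_dec_classic (lF ++ map (fun k => Nat.iter k f s) (seq 0 (S M))).

Definition window_end : T := Nat.iter M f s.

Definition window_perm (x : T) : T := if eq_dec_classic x window_end then s else f x.

Lemma in_window x : In x window <->
  (exists d, In d D /\ ~ I d /\ same_cycle f d x) \/ (exists k, k <= M /\ x = Nat.iter k f s).
Proof.
unfold window. rewrite nodup_In, in_app_iff, lF_spec, in_map_iff. split.
- intros [H|[k [<- Hk]]]; [left; auto | right]. exists k. apply in_seq in Hk. split; [lia | auto].
- intros [H|[k [Hk ->]]]; [left; auto | right]. exists k. split; auto. apply in_seq. lia.
Qed.

Lemma I_iter k : I (Nat.iter k f s).
Proof. apply (I_same_cycle s); auto. apply same_cycle_iter. Qed.

Lemma finite_part_not_I x d : In d D -> ~ I d -> same_cycle f d x -> ~ I x.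
Proof. intros _ Nd Hc Ix. apply Nd, (I_same_cycle x); auto. apply same_cycle_sym; auto. Qed.

Lemma window_end_not_D : ~ In window_end D.
Proof.
intros He. destruct (D_segment _ He (I_iter M)) as [k [Hk Ek]].
apply (I_iter_inj s I_s) in Ek. lia.
Qed.

Lemma D_window d : In d D -> In d window /\ In (f d) window.
Proof.
intros Hd. rewrite !in_window. destruct (classic (I d)) as [Id|Nd].
- destruct (D_segment d Hd Id) as [k [Hk ->]].
  split; right; [exists k | exists (S k)]; split; auto; lia.
- split; left; exists d; repeat split; auto; [apply same_cycle_refl | apply same_cycle_step].
Qed.

Lemma window_perm_in x : In x window -> In (window_perm x) window.
Proof.
intros Hx. unfold window_perm. apply in_window. destruct (eq_dec_classic x window_end) as [->|Ne].
- right. exists 0. split; [lia | auto].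
- apply in_window in Hx as [[d [H1 [H2 H3]]]|[k [Hk ->]]].
  + left. exists d. repeat split; auto. eapply same_cycle_trans; [exact H3 | apply same_cycle_step].
  + right. exists (S k). split; auto. destruct (Nat.eq_dec k M) as [->|]; [contradiction | lia].
Qed.

(* [s] has no [f]-preimage in the window: it would lie on [I] strictly before [s]. *)
Lemma window_no_preimage_s y : In y window -> y <> window_end -> f y <> s.
Proof.
intros Hy Ne E. apply in_window in Hy as [[d [H1 [H2 H3]]]|[k [Hk ->]]].
- apply (finite_part_not_I s d H1 H2); auto.
  eapply same_cycle_trans; [exact H3|]. rewrite <- E. apply same_cycle_step.
- assert (k <> M) by (intros ->; contradiction).
  apply (I_iter_inj s I_s (S k) 0) in E. lia.
Qed.

Lemma window_perm_inj x y : In x window -> In y window -> window_perm x = window_perm y -> x = y.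
Proof.
intros Hx Hy E. unfold window_perm in E.
destruct (eq_dec_classic x window_end) as [Ex|Nx];
  destruct (eq_dec_classic y window_end) as [Ey|Ny].
- congruence.
- exfalso. apply (window_no_preimage_s y); auto.
- exfalso. apply (window_no_preimage_s x); auto.
- apply f_inj. auto.
Qed.

Lemma window_escape k : ~ In (Nat.iter k f (f window_end)) window.
Proof.
assert (Ek : Nat.iter k f (f window_end) = Nat.iter (S k + M) f s).
{ rewrite Nat.iter_add. unfold window_end. rewrite <- Nat.iter_succ_r. reflexivity. }
rewrite Ek, in_window. intros [[d [H1 [H2 H3]]]|[k' [Hk' E]]].
- exact (finite_part_not_I _ d H1 H2 H3 (I_iter (S k + M))).
- apply (I_iter_inj s I_s) in E. lia.
Qed.

End Segment.

Lemma exists_window (D : list T) : exists W e p,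
  NoDup W /\ In e W /\ I e /\ ~ In e D /\
  (forall d, In d D -> In d W) /\ (forall d, In d D -> In (f d) W) /\
  (forall x, In x W -> In (p x) W) /\
  (forall x y, In x W -> In y W -> p x = p y -> x = y) /\
  (forall x, In x W -> x <> e -> p x = f x) /\
  (forall k, ~ In (Nat.iter k f (f e)) W).
Proof.
destruct (I_segment D) as [s [M [I_s D_segment]]].
destruct (finite_cycles_meeting D) as [lF lF_spec].
exists (window s M lF), (window_end s M), (window_perm s M).
split; [apply NoDup_nodup|]. split.
{ apply (in_window D s M lF); auto. right. exists M; auto. }
split; [apply I_iter; auto|]. split; [apply (window_end_not_D D s M); auto|].
split; [intros d Hd; apply (D_window D s M lF); auto|].
split; [intros d Hd; apply (D_window D s M lF); auto|].
split; [intros x; apply (window_perm_in D s M lF); auto|].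
split; [intros x y; apply (window_perm_inj D s M lF); auto|].
split; [intros x _ Ne; unfold window_perm; destruct (eq_dec_classic x _); [contradiction | auto]|].
intros k. apply (window_escape D s M lF); auto.
Qed.

End WindowConstruction.

(** * Counting cycles *)

Definition zsum (F : nat -> Z) (l : list nat) : Z := fold_right Z.add 0%Z (map F l).

Lemma zsum_ext F G l : (forall n, In n l -> F n = G n) -> zsum F l = zsum G l.
Proof. unfold zsum. intros H. f_equal. apply map_ext_in. auto. Qed.

Lemma zsum_sub F G l : zsum (fun n => F n - G n)%Z l = (zsum F l - zsum G l)%Z.
Proof. unfold zsum. induction l; simpl; lia. Qed.

Lemma zsum_add F G l : zsum (fun n => F n + G n)%Z l = (zsum F l + zsum G l)%Z.
Proof. unfold zsum. induction l; simpl; lia. Qed.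

Lemma zsum_indicator x s k :
  zsum (fun n => if Nat.eqb n x then 1%Z else 0%Z) (seq s k) =
  (if andb (Nat.leb s x) (Nat.ltb x (s + k)) then 1%Z else 0%Z).
Proof.
unfold zsum. revert s. induction k; intros s; simpl.
- destruct (Nat.leb_spec s x); destruct (Nat.ltb_spec x (s + 0)); simpl; lia.
- rewrite IHk. destruct (Nat.eqb_spec s x);
  destruct (Nat.leb_spec s x); destruct (Nat.leb_spec (S s) x);
  destruct (Nat.ltb_spec x (S s + k)); destruct (Nat.ltb_spec x (s + S k)); simpl; lia.
Qed.

Lemma zsum_count_of_length {T : Type} (L : list (list T)) N :
  (forall c, In c L -> 1 <= length c <= N) ->
  zsum (fun n => Z.of_nat (count_of_length L n)) (seq 1 N) = Z.of_nat (length L).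
Proof.
unfold count_of_length. induction L as [|c L IH]; intros H.
- unfold zsum. induction (seq 1 N); simpl; auto.
- cbn [length]. rewrite (zsum_ext _ (fun n => (if Nat.eqb n (length c) then 1 else 0) +
     Z.of_nat (length (filter (fun c0 => Nat.eqb (length c0) n) L)))%Z).
  + rewrite zsum_add, zsum_indicator, IH by (intros; apply H; right; auto).
    destruct (H c (or_introl eq_refl)).
    rewrite (proj2 (Nat.leb_le 1 (length c))) by lia.
    rewrite (proj2 (Nat.ltb_lt (length c) (1 + N))) by lia. cbn [andb length]. lia.
  + intros n _. cbn [filter]. destruct (Nat.eqb_spec (length c) n);
    destruct (Nat.eqb_spec n (length c)); cbn [length]; lia.
Qed.

Lemma zsum_count_difference {T : Type} (x : nat -> nat) (L L' : list (list T)) N :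
  (forall c, In c L -> 1 <= length c <= N) -> (forall c, In c L' -> 1 <= length c <= N) ->
  zsum (fun n => Z.of_nat (x n + count_of_length L n) - Z.of_nat (x n + count_of_length L' n))%Z
    (seq 1 N) = (Z.of_nat (length L) - Z.of_nat (length L'))%Z.
Proof.
intros HL HL'. rewrite <- (zsum_count_of_length L N), <- (zsum_count_of_length L' N), <- zsum_sub
  by auto.
apply zsum_ext. intros n _. lia.
Qed.

Lemma Z_even_of_nat n : Z.even (Z.of_nat n) = Nat.even n.
Proof.
induction n; auto.
rewrite Nat2Z.inj_succ, Z.even_succ, Nat.even_succ, <- Z.negb_even, <- Nat.negb_even, IHn. auto.
Qed.

Lemma Z_even_sub_of_nat m n : Nat.even m = Nat.even n -> Z.even (Z.of_nat m - Z.of_nat n) = true.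
Proof. intros E. rewrite Z.even_sub, !Z_even_of_nat, E. apply Bool.eqb_reflx. Qed.

Lemma approx_even_of_counts {T : Type} (X Y : T -> T) N (a b : nat -> nat) :
  (forall n, 0 < n -> has_card (cycle_of_size X n) (Fin (a n))) ->
  (forall n, 0 < n -> has_card (cycle_of_size Y n) (Fin (b n))) ->
  (forall n, N < n -> forall S, cycle_of_size X n S <-> cycle_of_size Y n S) ->
  same_card (open_cycle X) (open_cycle Y) -> same_card (forward_cycle X) (forward_cycle Y) ->
  Z.even (zsum (fun n => Z.of_nat (a n) - Z.of_nat (b n))%Z (seq 1 N)) = true ->
  approx_even X Y.
Proof.
intros Ha Hb Hn Ho Hw Hev.
assert (HC : forall n, 0 < n -> N < n -> sameC X Y n).
{ intros n _ H. apply same_card_ext. apply Hn; auto. }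
split; [split; [auto | split; [auto | split]] |].
- exists N. auto.
- intros n H _. exists (a n), (b n). auto.
- exists N, a, b. split; [auto|]. split; [intros n H1 H2; right; auto | auto].
Qed.

Lemma cycle_avoiding_agree {T : Type} (X Y : T -> T) (W : list T) S :
  (forall a, ~ In (X a) W \/ ~ In (Y a) W -> Y a = X a) ->
  is_cycle X S -> ~ meets W S -> is_cycle Y S.
Proof.
intros agree [Hne [Hinv Hmin]] Hm.
assert (nW : forall x, S x -> ~ In x W) by (intros x Sx Hx; apply Hm; exists x; auto).
assert (YX : forall a, S a -> Y a = X a).
{ intros a Sa. apply agree. left. apply nW, Hinv. auto. }
split; auto. split.
- intros a. split; intros H.
  + assert (E : Y a = X a) by (apply agree; right; apply nW; auto).
    apply Hinv. rewrite <- E. auto.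
  + rewrite YX; auto. apply Hinv; auto.
- intros S' Hsub HS' Hinv'. apply Hmin; auto.
  intros a. destruct (classic (S a)) as [Sa|Na].
  + rewrite <- (YX a Sa). apply Hinv'.
  + split; intros H; exfalso; apply Na; [apply Hinv|]; apply Hsub; auto.
Qed.

Definition surjective_map {T : Type} (X : T -> T) : Prop := forall y, exists x, X x = y.

Section InfiniteCycle.
Context {T : Type}.
Variables (X : T -> T) (e : T).
Hypothesis X_inj : injective_map X.
Hypothesis infinite_e : forall S, is_cycle X S -> infinite_set S -> S e.
Hypothesis e_infinite : infinite_set (same_cycle X e).

Lemma infinite_cycle_iff S : is_cycle X S /\ infinite_set S <-> set_eq S (same_cycle X e).
Proof.
split; intros H.
- destruct H as [HS Hi]. apply (is_cycle_same_cycle X S e HS), infinite_e; auto.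
- rename H into E. split.
  + apply (is_cycle_of_same_cycle X S e); [apply E, same_cycle_refl | auto].
  + apply infinite_set_ext with (same_cycle X e); auto. apply set_eq_sym; auto.
Qed.

Lemma open_forward_surjective : surjective_map X ->
  (forall S, open_cycle X S <-> set_eq S (same_cycle X e)) /\ (forall S, ~ forward_cycle X S).
Proof.
intros Hs. split.
- intros S. rewrite <- infinite_cycle_iff. split; [intros [HS [Hi _]]; auto|].
  intros [HS Hi]. split; [auto | split; [auto|]].
  intros [x [_ Hx]]. destruct (Hs x) as [y Hy]. apply (Hx y); auto.
- intros S [_ [_ [x [_ Hx]]]]. destruct (Hs x) as [y Hy]. apply (Hx y); auto.
Qed.

Lemma open_forward_not_surjective : ~ surjective_map X ->
  (forall S, forward_cycle X S <-> set_eq S (same_cycle X e)) /\ (forall S, ~ open_cycle X S).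
Proof.
intros Hs.
assert (Hy : exists y, forall x, X x <> y).
{ apply NNPP. intros H. apply Hs. intros y. apply NNPP. intros H'. apply H. exists y.
  intros x Hx. apply H'. exists x; auto. }
destruct Hy as [y Hy].
(* A point without preimage lies on an infinite cycle, hence on the one through [e]. *)
assert (Hye : same_cycle X e y).
{ apply same_cycle_sym, (infinite_e (same_cycle X y) (same_cycle_is_cycle X y)).
  apply NNPP. intros H. destruct (finite_cycle_preimage X X_inj y H) as [x Hx].
  apply (Hy x); auto. }
split.
- intros S. rewrite <- infinite_cycle_iff. split; [intros [HS [Hi _]]; auto|].
  intros [HS Hi]. split; [auto | split; [auto|]].
  exists y. split; auto. apply (is_cycle_same_cycle X S e HS (infinite_e S HS Hi)); auto.
- intros S [HS [Hi Hn]]. apply Hn. exists y. split; auto.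
  apply (is_cycle_same_cycle X S e HS (infinite_e S HS Hi)); auto.
Qed.

End InfiniteCycle.

(** * Perturbing [f] inside the window *)

(* [g] differs from [f] only inside the window [W]; there [f] and [g] are cut into the
   permutations [p] and [q] of [W], whose cycle decompositions have the same parity. *)
Section Perturbation.
Context {T : Type}.
Variables (f g p q : T -> T) (W : list T) (e : T) (L1 L2 : list (list T)) (c1 c2 : list T).
Hypothesis f_inj : injective_map f.
Hypothesis g_inj : injective_map g.
Hypothesis e_W : In e W.
Hypothesis p_W : forall x, In x W -> In (p x) W.
Hypothesis p_f : forall x, In x W -> x <> e -> p x = f x.
Hypothesis f_escape : forall k, ~ In (Nat.iter k f (f e)) W.
Hypothesis q_W : forall x, In x W -> In (q x) W.
Hypothesis q_g : forall x, In x W -> x <> e -> q x = g x.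
Hypothesis g_escape : forall k, ~ In (Nat.iter k g (g e)) W.
Hypothesis agree : forall a, ~ In (f a) W \/ ~ In (g a) W -> g a = f a.
Hypothesis decomp_p : cycle_decomp_on (fun x => In x W) p e L1 c1.
Hypothesis decomp_q : cycle_decomp_on (fun x => In x W) q e L2 c2.
Hypothesis parity : Nat.even (length L1) = Nat.even (length L2).
Hypothesis f_infinite_e : forall S, is_cycle f S -> infinite_set S -> S e.
Hypothesis surjective_iff : surjective_map f <-> surjective_map g.
Hypothesis f_finite : forall n, 0 < n -> exists k, has_card (cycle_of_size f n) (Fin k).

Lemma agree_sym a : ~ In (g a) W \/ ~ In (f a) W -> f a = g a.
Proof. intros H. symmetry. apply agree. tauto. Qed.

Lemma cycle_of_size_avoiding_iff n S :
  cycle_of_size f n S /\ ~ meets W S <-> cycle_of_size g n S /\ ~ meets W S.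
Proof.
split; intros [[HS Hs] Hm]; (split; [split|]); auto.
- apply (cycle_avoiding_agree f g W); auto.
- apply (cycle_avoiding_agree g f W); auto. apply agree_sym.
Qed.

Lemma g_infinite_e S : is_cycle g S -> infinite_set S -> S e.
Proof.
intros HS Hi. destruct (classic (meets W S)) as [Hm|Hm].
- apply (infinite_cycle_meets_window g q W e g_inj e_W q_W q_g g_escape L2 c2); auto.
- exfalso. apply Hm. exists e. split; auto. apply f_infinite_e; auto.
  apply (cycle_avoiding_agree g f W); auto. apply agree_sym.
Qed.

Lemma same_card_open_forward : same_card (open_cycle f) (open_cycle g) /\
  same_card (forward_cycle f) (forward_cycle g).
Proof.
pose proof (same_cycle_e_infinite f W e f_inj e_W f_escape) as If.
pose proof (same_cycle_e_infinite g W e g_inj e_W g_escape) as Ig.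
destruct (classic (surjective_map f)) as [Hs|Hs].
- destruct (open_forward_surjective f e f_infinite_e If Hs) as [A1 A2].
  destruct (open_forward_surjective g e g_infinite_e Ig (proj1 surjective_iff Hs)) as [B1 B2].
  split; intros c.
  + rewrite (has_card_singleton _ _ A1), (has_card_singleton _ _ B1). tauto.
  + rewrite (has_card_empty _ A2), (has_card_empty _ B2). tauto.
- assert (Hs' : ~ surjective_map g) by (rewrite <- surjective_iff; auto).
  destruct (open_forward_not_surjective f e f_inj f_infinite_e If Hs) as [A1 A2].
  destruct (open_forward_not_surjective g e g_inj g_infinite_e Ig Hs') as [B1 B2].
  split; intros c.
  + rewrite (has_card_empty _ A2), (has_card_empty _ B2). tauto.
  + rewrite (has_card_singleton _ _ A1), (has_card_singleton _ _ B1). tauto.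
Qed.

Lemma large_cycle_of_size_iff n S : length W < n -> cycle_of_size f n S <-> cycle_of_size g n S.
Proof.
intros Hn. split; intros HS; apply (cycle_of_size_avoiding_iff n S); split; auto.
- apply (large_cycle_avoids_window f p W e f_inj e_W p_W p_f f_escape L1 c1 decomp_p n); auto.
- apply (large_cycle_avoids_window g q W e g_inj e_W q_W q_g g_escape L2 c2 decomp_q n); auto.
Qed.

Lemma cycles_avoiding_window : exists A : nat -> list (T -> Prop), forall n, 0 < n ->
  enumerates (fun S => cycle_of_size f n S /\ ~ meets W S) (A n).
Proof.
apply (choice (fun n A => 0 < n -> enumerates (fun S => cycle_of_size f n S /\ ~ meets W S) A)).
intros n. destruct (Nat.eq_dec n 0) as [->|Hn]; [exists []; lia|].
destruct (f_finite n) as [k [l [_ [Hl [Hd Hc]]]]]; [lia|].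
set (avoids := fun S => if excluded_middle_informative (meets W S) then false else true).
assert (avoidsE : forall S, avoids S = true <-> ~ meets W S).
{ intros S. unfold avoids.
  destruct (excluded_middle_informative (meets W S)); intuition congruence. }
exists (filter avoids l). intros _. split; [|split].
- apply Forall_forall. intros S HS. apply filter_In in HS as [HS HaS].
  rewrite Forall_forall in Hl. split; [auto | apply avoidsE; auto].
- apply distinct_sets_filter; auto.
- intros S [HS Hm]. destruct (Hc S HS) as [S' [HS' E]]. exists S'. split; auto.
  apply filter_In. split; auto. apply avoidsE. intros [x [Hx Sx]]. apply Hm.
  exists x. split; auto. apply E; auto.
Qed.

Lemma perturbation_approx_even : approx_even g f /\ approx_even f g.
Proof.
destruct cycles_avoiding_window as [A HA].
set (a := fun n => length (A n) + count_of_length L1 n).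
set (b := fun n => length (A n) + count_of_length L2 n).
assert (Ca : forall n, 0 < n -> has_card (cycle_of_size f n) (Fin (a n))).
{ intros n Hn. apply (has_card_cycle_of_size f p W e f_inj e_W p_W p_f f_escape L1 c1); auto. }
assert (Cb : forall n, 0 < n -> has_card (cycle_of_size g n) (Fin (b n))).
{ intros n Hn. destruct (HA n Hn) as [H1 [H2 H3]].
  apply (has_card_cycle_of_size g q W e g_inj e_W q_W q_g g_escape L2 c2); auto.
  split; [|split]; auto.
  - eapply Forall_impl; [|exact H1]. intros S. apply cycle_of_size_avoiding_iff.
  - intros S HS. apply H3, cycle_of_size_avoiding_iff; auto. }
pose proof (decomp_length p W e L1 c1 decomp_p) as bounds1.
pose proof (decomp_length q W e L2 c2 decomp_q) as bounds2.
destruct same_card_open_forward as [Ho Hw].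
split.
- apply (approx_even_of_counts g f (length W) b a); auto.
  + intros n Hn S. symmetry. apply large_cycle_of_size_iff; auto.
  + apply same_card_sym; auto.
  + apply same_card_sym; auto.
  + unfold a, b. rewrite zsum_count_difference by auto. apply Z_even_sub_of_nat; auto.
- apply (approx_even_of_counts f g (length W) a b); auto.
  + intros n Hn S. apply large_cycle_of_size_iff; auto.
  + unfold a, b. rewrite zsum_count_difference by auto. apply Z_even_sub_of_nat; auto.
Qed.

End Perturbation.

Lemma iterates_escape_agree {T : Type} (f g : T -> T) (W : list T) x :
  (forall a, ~ In (f a) W -> g a = f a) -> (forall k, ~ In (Nat.iter k f x) W) ->
  forall k, Nat.iter k g x = Nat.iter k f x.
Proof.
intros agree escape k. induction k as [|k IH]; simpl; auto.
rewrite IH. apply agree. apply (escape (S k)).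
Qed.

Lemma surjective_compLR {T : Type} (f h : T -> T) :
  injective_map h -> surjective_map h ->
  (surjective_map f <-> surjective_map (compLR f h)) /\
  (surjective_map f <-> surjective_map (compLR h f)).
Proof.
unfold surjective_map, compLR. intros h_inj h_surj. split; split; intros Hs y.
- destruct (h_surj y) as [z <-]. destruct (Hs z) as [x <-]. eauto.
- destruct (Hs (h y)) as [x Hx]. eauto.
- destruct (Hs y) as [z <-]. destruct (h_surj z) as [x <-]. eauto.
- destruct (Hs y) as [x Hx]. eauto.
Qed.

Section AltPerturbation.
Context {T : Type}.
Variables (f h : T -> T) (ts : list (T -> T)) (D W : list T) (e : T) (p : T -> T).
Hypothesis f_inj : injective_map f.
Hypothesis f_infinite_e : forall S, is_cycle f S -> infinite_set S -> S e.
Hypothesis f_finite : forall n, 0 < n -> exists k, has_card (cycle_of_size f n) (Fin k).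
Hypothesis ts_transposition : Forall is_transposition ts.
Hypothesis ts_even : Nat.even (length ts) = true.
Hypothesis ts_D : Forall (fixes_outside D) ts.
Hypothesis h_def : forall x, h x = apply_all ts x.
Hypothesis W_nodup : NoDup W.
Hypothesis e_W : In e W.
Hypothesis e_D : ~ In e D.
Hypothesis D_W : forall d, In d D -> In d W.
Hypothesis f_D_W : forall d, In d D -> In (f d) W.
Hypothesis p_W : forall x, In x W -> In (p x) W.
Hypothesis p_inj : forall x y, In x W -> In y W -> p x = p y -> x = y.
Hypothesis p_f : forall x, In x W -> x <> e -> p x = f x.
Hypothesis f_escape : forall k, ~ In (Nat.iter k f (f e)) W.

Lemma h_inj : injective_map h.
Proof. intros x y. rewrite !h_def. apply apply_all_inj; auto. Qed.

Lemma h_surj : surjective_map h.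
Proof.
intros y. destruct (apply_all_surj ts ts_transposition y) as [x Hx]. exists x. rewrite h_def; auto.
Qed.

Lemma h_fixes_outside : fixes_outside D h.
Proof. intros x Hx. rewrite h_def. apply (apply_all_fixes_outside D); auto. Qed.

Lemma h_fixed x : ~ In x D \/ ~ In (h x) D -> h x = x.
Proof.
intros [Hx|Hhx]; [apply h_fixes_outside; auto|].
apply h_fixes_outside. intros Hx.
apply Hhx, (fixes_outside_maps_into h D h_inj h_fixes_outside); auto.
Qed.

Lemma ts_W : Forall (fixes_outside W) ts.
Proof.
eapply Forall_impl; [|exact ts_D]. intros t Ht x Hx. apply Ht. intros HD. apply Hx, D_W; auto.
Qed.

Lemma h_W x : In x W -> In (h x) W.
Proof.
apply (fixes_outside_maps_into h W h_inj). intros y Hy. apply h_fixes_outside.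
intros HD. apply Hy, D_W; auto.
Qed.

Lemma approx_even_right : approx_even (compLR f h) f.
Proof.
destruct (window_cycle_parity W e W_nodup e_W p (fun x => h (p x)) ts p_W p_inj
  ts_transposition ts_W ts_even (or_introl (fun x => h_def (p x))))
  as [L1 [c1 [L2 [c2 [D1 [D2 Hpar]]]]]].
assert (agree : forall a, ~ In (f a) W \/ ~ In (h (f a)) W -> h (f a) = f a).
{ intros a Ha. apply h_fixed. destruct Ha; [left | right]; intros HD; auto. }
refine (proj1 (perturbation_approx_even f (compLR f h) p (fun x => h (p x)) W e L1 L2 c1 c2
  f_inj _ e_W p_W p_f f_escape _ _ _ _ D1 D2 Hpar f_infinite_e _ f_finite)); unfold compLR.
- intros x y E. apply f_inj, h_inj; auto.
- intros x Hx. apply h_W; auto.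
- intros x Hx Ne. rewrite p_f; auto.
- intros k. assert (E : h (f e) = f e).
  { apply h_fixed. left. intros HD. apply (f_escape 0), D_W; auto. }
  rewrite E, (iterates_escape_agree f (fun x => h (f x)) W (f e)); auto.
- exact agree.
- apply surjective_compLR; [apply h_inj | apply h_surj].
Qed.

Lemma approx_even_left : approx_even f (compLR h f).
Proof.
destruct (window_cycle_parity W e W_nodup e_W p (fun x => p (h x)) ts p_W p_inj
  ts_transposition ts_W ts_even (or_intror (fun x => f_equal p (h_def x))))
  as [L1 [c1 [L2 [c2 [D1 [D2 Hpar]]]]]].
assert (h_e : h e = e) by (apply h_fixed; auto).
assert (agree : forall a, ~ In (f a) W \/ ~ In (f (h a)) W -> f (h a) = f a).
{ intros a Ha. rewrite h_fixed; auto. destruct Ha; [left | right]; intros HD; auto. }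
refine (proj2 (perturbation_approx_even f (compLR h f) p (fun x => p (h x)) W e L1 L2 c1 c2
  f_inj _ e_W p_W p_f f_escape _ _ _ _ D1 D2 Hpar f_infinite_e _ f_finite)); unfold compLR.
- intros x y E. apply h_inj, f_inj; auto.
- intros x Hx. apply p_W, h_W; auto.
- intros x Hx Ne. rewrite p_f; auto.
  + apply h_W; auto.
  + intros E. apply Ne, h_inj. rewrite E, h_e. auto.
- intros k. rewrite h_e, (iterates_escape_agree f (fun x => f (h x)) W (f e)); auto.
- exact agree.
- apply surjective_compLR; [apply h_inj | apply h_surj].
Qed.

End AltPerturbation.

Lemma unique_infinite_cycle {T : Type} (f : T -> T) :
  (has_card (open_cycle f) (Fin 1) /\ has_card (forward_cycle f) (Fin 0)) \/
  (has_card (open_cycle f) (Fin 0) /\ has_card (forward_cycle f) (Fin 1)) ->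
  exists I, is_cycle f I /\ infinite_set I /\
    forall S, is_cycle f S -> infinite_set S -> set_eq S I.
Proof.
intros H.
assert (H' : exists I, (open_cycle f I \/ forward_cycle f I) /\
  forall S, open_cycle f S \/ forward_cycle f S -> set_eq S I).
{ destruct H as [[H1 H0]|[H0 H1]]; apply has_card_one in H1 as [I [HI Hu]];
    pose proof (has_card_zero _ H0) as Hn; exists I; split; auto;
    intros S [HS|HS]; auto; exfalso; apply (Hn S HS). }
destruct H' as [I [HI Hu]]. exists I. split; [|split].
- destruct HI as [[? _]|[? _]]; auto.
- destruct HI as [[_ [? _]]|[_ [? _]]]; auto.
- intros S HS Hi. apply Hu.
  destruct (classic (exists x, S x /\ forall y, f y <> x)); [right | left]; split; auto.
Qed.

Theorem mainTheorem17 (T : Type) (HT : countably_infinite T)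
  (f h : T -> T) (Hf : injective_map f)
  (Hcyc : (has_card (open_cycle f) (Fin 1) /\ has_card (forward_cycle f) (Fin 0)) \/
          (has_card (open_cycle f) (Fin 0) /\ has_card (forward_cycle f) (Fin 1)))
  (Hfin : forall n, 0 < n -> exists k, has_card (cycle_of_size f n) (Fin k))
  (Hh : in_Alt h) :
  approx_even (compLR f h) f /\ approx_even f (compLR h f).
Proof.
destruct (unique_infinite_cycle f Hcyc) as [I [I_cycle [I_infinite I_unique]]].
destruct Hh as [ts [ts_transposition [ts_even h_def]]].
destruct (transpositions_support ts ts_transposition) as [D ts_D].
destruct (exists_window f I Hf I_cycle I_infinite I_unique D)
  as [W [e [p [W_nodup [e_W [I_e [e_D [D_W [f_D_W [p_W [p_inj [p_f f_escape]]]]]]]]]]]].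
assert (f_infinite_e : forall S, is_cycle f S -> infinite_set S -> S e).
{ intros S HS Hi. apply (I_unique S HS Hi); auto. }
split.
- apply (approx_even_right f h ts D W e p); auto.
- apply (approx_even_left f h ts D W e p); auto.
Qed.
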